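(* Let $\langle M,\mathsf{S}\rangle$ be a sum structure. Then for all $x\in M$ and $X\subseteq M$: $x\,\mathsf{S}\,X$ if and only if $x\,\mathsf{S}_{\sqsubseteq_{\mathsf{S}}}\,X$.
   Context: For a set $M$ and a relation $\mathsf{S}\subseteq M\times\mathcal{P}(M)$ define: $x\sqsubseteq_{\mathsf{S}} y$ iff there is $X\subseteq M$ with $y\,\mathsf{S}\,X$ and $x\in X$; $\mathrm{I}(x)=\{y\in M\mid y\sqsubseteq_{\mathsf{S}} x\}$ and for $A\subseteq M$, $\mathrm{I}(A)=\bigcup_{a\in A}\mathrm{I}(a)$; $x$ s-overlaps $y$ iff there are $X,Y\subseteq M$ with $x\,\mathsf{S}\,X$, $y\,\mathsf{S}\,Y$, $X\cap Y\neq\emptyset$; a set $A\subseteq M$ is pre-dense in $B\subseteq M$ iff for every $b\in B$ there is $a\in A$ such that $a$ s-overlaps $b$. Overlap w.r.t. $\sqsubseteq_{\mathsf{S}}$: $x\circ y$ iff there is $z\in M$ with $z\sqsubseteq_{\mathsf{S}} x$ and $z\sqsubseteq_{\mathsf{S}} y$. The induced sum: $x\,\mathsf{S}_{\sqsubseteq_{\mathsf{S}}}\,X$ iff every $y\in X$ satisfies $y\sqsubseteq_{\mathsf{S}} x$, and for every $z\in M$ with $z\sqsubseteq_{\mathsf{S}} x$ there is $y\in X$ with $y\circ z$. A sum structure is a pair $\langle M,\mathsf{S}\rangle$ satisfying: (S1) for every non-empty $X\subseteq M$ there is $x\in M$ with $x\,\mathsf{S}\,X$; (S2) $x\,\mathsf{S}\,X\wedge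 y\,\mathsf{S}\,X\to x=y$; (S3) $x\,\mathsf{S}\,X\wedge y\,\mathsf{S}\,Y\wedge x\in Y\to y\,\mathsf{S}\,(X\cup Y)$; (S4) if $x\,\mathsf{S}\,X$, $x\,\mathsf{S}\,Y$ and $y\in Y$, then there are $z\in X$ and $Z,U\subseteq M$ with $z\,\mathsf{S}\,Z$, $y\,\mathsf{S}\,U$ and $Z\cap U\neq\emptyset$; (S5) for all $x\in M$ and $X\subseteq M$: if $X$ is pre-dense in $\mathrm{I}(x)$ then $x\,\mathsf{S}\,(\mathrm{I}(x)\cap\mathrm{I}(X))$. *)

Section SumDefs.
Context {M : Type} (S : M -> (M -> Prop) -> Prop).

Definition spart (x y : M) : Prop := exists X : M -> Prop, S y X /\ X x.

Definition Iof (x : M) : M -> Prop := fun y => spart y x.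
Definition IofSet (A : M -> Prop) : M -> Prop := fun y => exists a, A a /\ Iof a y.

Definition soverlaps (x y : M) : Prop :=
  exists X Y : M -> Prop, S x X /\ S y Y /\ exists z, X z /\ Y z.

Definition predense (A B : M -> Prop) : Prop :=
  forall b, B b -> exists a, A a /\ soverlaps a b.

Definition ovl (x y : M) : Prop := exists z, spart z x /\ spart z y.

Definition induced_sum (x : M) (X : M -> Prop) : Prop :=
  (forall y, X y -> spart y x) /\
  (forall z, spart z x -> exists y, X y /\ ovl y z).

Definition sum_structure : Prop :=
  (forall X : M -> Prop, (exists y, X y) -> exists x, S x X) /\
  (forall x y X, S x X -> S y X -> x = y) /\
  (forall x y X Y, S x X -> S y Y -> Y x -> S y (fun z => X z \/ Y z)) /\
  (forall x X Y y, S x X -> S x Y -> Y y ->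
              exists z Z U, X z /\ S z Z /\ S y U /\ exists w, Z w /\ U w) /\
  (forall x X, predense X (Iof x) ->
              S x (fun z => Iof x z /\ IofSet X z)).
End SumDefs.

From Stdlib Require Import FunctionalExtensionality PropExtensionality.

(* Forward direction: if x S X then every member of X is a part of x by
   definition of ⊑_S, and (S4) says every part of x overlaps some member of X.

   Backward direction: suppose x is the induced sum of X.  The induced-sum
   condition makes X pre-dense in I(x), so (S5) gives x S (I(x) ∩ I(X)); since
   ⊑_S is transitive (S3) and X ⊆ I(x), this set is just I(X).  Every x has a
   part ((S1) and (S4)), so X is non-empty and (S1) yields some s with s S X.
   By the forward direction s is also an induced sum of X, hence s S I(X) too,
   and the functionality axiom (S2) forces x = s. *)

Section SumStructure.
Context {M : Type} (S : M -> (M -> Prop) -> Prop).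

Hypothesis S1 : forall X : M -> Prop, (exists y, X y) -> exists x, S x X.
Hypothesis S2 : forall x y X, S x X -> S y X -> x = y.
Hypothesis S3 : forall x y X Y, S x X -> S y Y -> Y x -> S y (fun z => X z \/ Y z).
Hypothesis S4 : forall x X Y y, S x X -> S x Y -> Y y ->
  exists z Z U, X z /\ S z Z /\ S y U /\ exists w, Z w /\ U w.
Hypothesis S5 : forall x X, predense S X (Iof S x) ->
  S x (fun z => Iof S x z /\ IofSet S X z).

(* Parthood ⊑_S is transitive: (S3) merges the two witnessing sum sets. *)
Lemma spart_trans w a x : spart S w a -> spart S a x -> spart S w x.
Proof.
  intros [W [HW Hw]] [A [HA Ha]].
  exists (fun z => W z \/ A z). split; [exact (S3 a x W A HW HA Ha) | now left].
Qed.

Lemma sum_is_induced_sum x X : S x X -> induced_sum S x X.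
Proof.
  intros HX. split.
  - intros y Hy. now exists X.
  - intros z [Z [HZ Hz]].
    destruct (S4 x X Z z HX HZ Hz) as [y [Y [U [Hy [HY [HU [w [HwY HwU]]]]]]]].
    exists y. split; [exact Hy |].
    exists w. split; [now exists Y | now exists U].
Qed.

(* Every element has a part: take a sum t of {x} and apply (S4) to t S {x}. *)
Lemma has_part x : exists w, spart S w x.
Proof.
  destruct (S1 (fun z => z = x) (ex_intro _ x eq_refl)) as [t Ht].
  destruct (S4 t _ _ x Ht Ht eq_refl) as [z [Z [U [Hz [HZ [_ [w [HwZ _]]]]]]]].
  subst z. now exists w, Z.
Qed.

(* Something with an induced sum is non-empty: a part of x overlaps a member. *)
Lemma induced_sum_nonempty x X : induced_sum S x X -> exists y, X y.
Proof.
  intros [_ Hcover]. destruct (has_part x) as [w Hw].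
  destruct (Hcover w Hw) as [y [Hy _]]. now exists y.
Qed.

(* The covering clause of the induced sum is pre-density of X in I(x):
   a common part of y and b lies in sum sets of both. *)
Lemma induced_sum_predense x X : induced_sum S x X -> predense S X (Iof S x).
Proof.
  intros [_ Hcover] b Hb.
  destruct (Hcover b Hb) as [y [Hy [w [[Y [HY HwY]] [B [HB HwB]]]]]].
  exists y. split; [exact Hy |].
  exists Y, B. split; [exact HY | split; [exact HB | now exists w]].
Qed.

Lemma induced_sum_sums_ideal x X : induced_sum S x X -> S x (IofSet S X).
Proof.
  intros Hind.
  assert (Hideal : (fun z => Iof S x z /\ IofSet S X z) = IofSet S X).
  { apply functional_extensionality; intro z; apply propositional_extensionality.
    split; [now intros [_ Hz] |].
    intros [a [Ha Hza]]. split; [| now exists a].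
    exact (spart_trans z a x Hza (proj1 Hind a Ha)). }
  rewrite <- Hideal. apply S5, induced_sum_predense, Hind.
Qed.

End SumStructure.

Theorem theorem3p12 (M : Type) (S : M -> (M -> Prop) -> Prop) :
  sum_structure S ->
  forall (x : M) (X : M -> Prop), S x X <-> induced_sum S x X.
Proof.
  intros [S1 [S2 [S3 [S4 S5]]]] x X. split.
  - apply (sum_is_induced_sum S S4).
  - intros Hind.
    destruct (S1 X (induced_sum_nonempty S S1 S4 x X Hind)) as [s Hs].
    assert (Hx : S x (IofSet S X)) by exact (induced_sum_sums_ideal S S3 S5 x X Hind).
    assert (Hs' : S s (IofSet S X))
      by exact (induced_sum_sums_ideal S S3 S5 s X (sum_is_induced_sum S S4 s X Hs)).
    rewrite (S2 x s _ Hx Hs'). exact Hs.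
Qed.
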